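(* Let $a\neq0$ be a constant and let $\phi(x,t)$ be a smooth function with $\phi_x\neq0$ satisfying $$(1-\partial_x^2)\frac{\phi_t}{\phi_x}+a\{\phi;x\}=0.$$ Then $u=-\phi_t/\phi_x$ satisfies the Camassa–Holm equation $$u_t-u_{xxt}+a u_{xxx}+3uu_x-2u_xu_{xx}-uu_{xxx}=0.$$
   Context: The Schwarzian derivative of a function $\phi(x,t)$ with $\phi_x\neq0$ is $\{\phi;x\}=\frac{\phi_{xxx}}{\phi_x}-\frac32\frac{\phi_{xx}^2}{\phi_x^2}$. All functions are smooth. *)

From Stdlib Require Import Reals List.
From Coquelicot Require Import Coquelicot.
Open Scope R_scope.

Definition px (f : R -> R -> R) : R -> R -> R :=
  fun x t => Derive (fun y => f y t) x.
Definition pt (f : R -> R -> R) : R -> R -> R :=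
  fun x t => Derive (fun s => f x s) t.

(* Iterated partial derivative along a word: true = d/dx, false = d/dt,
   the head of the list is applied last. *)
Fixpoint iterD (w : list bool) (f : R -> R -> R) : R -> R -> R :=
  match w with
  | nil => f
  | b :: w' => if b then px (iterD w' f) else pt (iterD w' f)
  end.

Definition smooth2 (f : R -> R -> R) : Prop :=
  forall w : list bool,
    (forall x t, continuous (fun p : R * R => iterD w f (fst p) (snd p)) (x, t)) /\
    (forall x t, ex_derive (fun y => iterD w f y t) x /\
                 ex_derive (fun s => iterD w f x s) t).

Definition schwarzian_x (phi : R -> R -> R) : R -> R -> R :=
  fun x t =>
    px (px (px phi)) x t / px phi x t
    - 3 / 2 * (px (px phi) x t) ^ 2 / (px phi x t) ^ 2.

(* Writing w = phi_t / phi_x, the Schwarzian obeys the transport law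
   S_t = w_xxx + 2 w_x S + w S_x, which follows from phi_t = w phi_x by the
   Leibniz rule and the symmetry of mixed partials.  The hypothesis says
   w_xx = w + a S; differentiating it in x and in t and substituting the
   transport law, every term of the Camassa-Holm expression for u = -w
   cancels. *)
From Stdlib Require Import Reals Lra List FunctionalExtensionality.
From Coquelicot Require Import Coquelicot.
Open Scope R_scope.

Lemma iterD_app (v w : list bool) (f : R -> R -> R) :
  iterD (v ++ w) f = iterD v (iterD w f).
Proof. induction v as [|b v IH]; simpl; [reflexivity | now rewrite IH]. Qed.

Lemma smooth2_iterD (w : list bool) (f : R -> R -> R) :
  smooth2 f -> smooth2 (iterD w f).
Proof. intros Hf v. rewrite <- iterD_app. apply Hf. Qed.

Lemma smooth2_is_derive_x (f : R -> R -> R) x t :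
  smooth2 f -> is_derive (fun y => f y t) x (px f x t).
Proof. intros Hf. apply Derive_correct, (proj2 (Hf nil) x t). Qed.

Lemma smooth2_is_derive_t (f : R -> R -> R) x t :
  smooth2 f -> is_derive (fun s => f x s) t (pt f x t).
Proof. intros Hf. apply Derive_correct, (proj2 (Hf nil) x t). Qed.

Lemma px_unique (f : R -> R -> R) x t l :
  is_derive (fun y => f y t) x l -> px f x t = l.
Proof. apply is_derive_unique. Qed.

Lemma pt_unique (f : R -> R -> R) x t l :
  is_derive (fun s => f x s) t l -> pt f x t = l.
Proof. apply is_derive_unique. Qed.

Lemma px_plus_scal (f g : R -> R -> R) c x t :
  ex_derive (fun y => f y t) x -> ex_derive (fun y => g y t) x ->
  px (fun x t => f x t + c * g x t) x t = px f x t + c * px g x t.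
Proof.
  intros Hf Hg. unfold px.
  rewrite Derive_plus, Derive_scal; [reflexivity | exact Hf | apply ex_derive_scal, Hg].
Qed.

Lemma pt_plus_scal (f g : R -> R -> R) c x t :
  ex_derive (fun s => f x s) t -> ex_derive (fun s => g x s) t ->
  pt (fun x t => f x t + c * g x t) x t = pt f x t + c * pt g x t.
Proof.
  intros Hf Hg. unfold pt.
  rewrite Derive_plus, Derive_scal; [reflexivity | exact Hf | apply ex_derive_scal, Hg].
Qed.

Lemma pt_px_comm (f : R -> R -> R) : smooth2 f -> pt (px f) = px (pt f).
Proof.
  intros Hf. apply functional_extensionality; intro x.
  apply functional_extensionality; intro t.
  symmetry. apply (Schwarz f).
  - exists (mkposreal 1 Rlt_0_1). intros u v _ _.
    destruct (proj2 (Hf nil) u v) as [fx ft].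
    destruct (proj2 (Hf (false :: nil)) u v) as [ftx _].
    destruct (proj2 (Hf (true :: nil)) u v) as [_ fxt].
    tauto.
  - apply continuity_2d_pt_filterlim, (proj1 (Hf (true :: false :: nil))).
  - apply continuity_2d_pt_filterlim, (proj1 (Hf (false :: true :: nil))).
Qed.

Ltac rewrite_derives solve_derive :=
  repeat match goal with
  | |- context [Derive ?g ?z] =>
      let E := fresh in
      epose proof (is_derive_unique g z _ ltac:(solve_derive)) as E;
      rewrite E; clear E
  end.

Definition schwarzian_jet (d1 d2 d3 : R) : R := d3 / d1 - 3 / 2 * d2 ^ 2 / d1 ^ 2.

Definition schwarzian_jet_deriv (d1 d2 d3 e1 e2 e3 : R) : R :=
  e3 / d1 - d3 * e1 / d1 ^ 2 - 3 * d2 * e2 / d1 ^ 2 + 3 * d2 ^ 2 * e1 / d1 ^ 3.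

Lemma is_derive_schwarzian_jet (f1 f2 f3 : R -> R) (e1 e2 e3 x : R) :
  is_derive f1 x e1 -> is_derive f2 x e2 -> is_derive f3 x e3 -> f1 x <> 0 ->
  is_derive (fun y => schwarzian_jet (f1 y) (f2 y) (f3 y)) x
    (schwarzian_jet_deriv (f1 x) (f2 x) (f3 x) e1 e2 e3).
Proof.
  intros H1 H2 H3 Hn. unfold schwarzian_jet.
  auto_derive; [repeat split; try (eexists; eassumption); auto |].
  rewrite_derives eassumption.
  unfold schwarzian_jet_deriv. field. exact Hn.
Qed.

Section QuotientJets.

(* [b k] and [a k] are the k-th derivatives of two functions b and a; [quotk]
   is the k-th derivative of b / a, solved from the Leibniz rule for
   b = (b / a) * a. *)
Variables b a : nat -> R -> R.
Hypothesis b_deriv : forall k y, is_derive (b k) y (b (S k) y).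
Hypothesis a_deriv : forall k y, is_derive (a k) y (a (S k) y).
Hypothesis a_neq0 : forall y, a 0%nat y <> 0.

Definition quot0 (y : R) : R := b 0%nat y / a 0%nat y.
Definition quot1 (y : R) : R := (b 1%nat y - quot0 y * a 1%nat y) / a 0%nat y.
Definition quot2 (y : R) : R :=
  (b 2%nat y - quot0 y * a 2%nat y - 2 * quot1 y * a 1%nat y) / a 0%nat y.
Definition quot3 (y : R) : R :=
  (b 3%nat y - quot0 y * a 3%nat y - 3 * quot1 y * a 2%nat y
   - 3 * quot2 y * a 1%nat y) / a 0%nat y.

Ltac jet_derive :=
  match goal with
  | |- is_derive ?g ?y _ =>
      match g with
      | context [b ?k _] => exact (b_deriv k y)
      | context [a ?k _] => exact (a_deriv k y)
      end
  | |- ex_derive ?g ?y =>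
      match g with
      | context [b ?k _] => exact (ex_intro _ _ (b_deriv k y))
      | context [a ?k _] => exact (ex_intro _ _ (a_deriv k y))
      end
  | |- _ <> 0 => apply a_neq0
  end.

Ltac quot_derive :=
  unfold quot3, quot2, quot1, quot0;
  auto_derive;
  [ repeat match goal with |- _ /\ _ => split end; try exact I; jet_derive |];
  rewrite_derives ltac:(idtac; jet_derive); (* [idtac;] delays [jet_derive] *)
  field; apply a_neq0.

Lemma is_derive_quot0 y : is_derive quot0 y (quot1 y).
Proof. quot_derive. Qed.

Lemma is_derive_quot1 y : is_derive quot1 y (quot2 y).
Proof. quot_derive. Qed.

Lemma is_derive_quot2 y : is_derive quot2 y (quot3 y).
Proof. quot_derive. Qed.

Lemma schwarzian_transport_jet y :
  schwarzian_jet_deriv (a 0%nat y) (a 1%nat y) (a 2%nat y)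
    (b 1%nat y) (b 2%nat y) (b 3%nat y)
  = quot3 y + 2 * quot1 y * schwarzian_jet (a 0%nat y) (a 1%nat y) (a 2%nat y)
    + quot0 y * schwarzian_jet_deriv (a 0%nat y) (a 1%nat y) (a 2%nat y)
                  (a 1%nat y) (a 2%nat y) (a 3%nat y).
Proof.
  unfold schwarzian_jet_deriv, schwarzian_jet, quot3, quot2, quot1, quot0.
  field. apply a_neq0.
Qed.

End QuotientJets.

Lemma is_derive_schwarzian_x (phi : R -> R -> R) x t :
  smooth2 phi -> px phi x t <> 0 ->
  is_derive (fun y => schwarzian_x phi y t) x
    (schwarzian_jet_deriv (px phi x t) (px (px phi) x t) (px (px (px phi)) x t)
       (px (px phi) x t) (px (px (px phi)) x t) (px (px (px (px phi))) x t)).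
Proof.
  intros Hs Hn.
  apply (is_derive_schwarzian_jet (fun y => px phi y t) (fun y => px (px phi) y t)
           (fun y => px (px (px phi)) y t)); [..| exact Hn];
    apply smooth2_is_derive_x;
    [ exact (smooth2_iterD (true :: nil) phi Hs)
    | exact (smooth2_iterD (true :: true :: nil) phi Hs)
    | exact (smooth2_iterD (true :: true :: true :: nil) phi Hs) ].
Qed.

Lemma is_derive_schwarzian_t (phi : R -> R -> R) x t :
  smooth2 phi -> px phi x t <> 0 ->
  is_derive (fun s => schwarzian_x phi x s) t
    (schwarzian_jet_deriv (px phi x t) (px (px phi) x t) (px (px (px phi)) x t)
       (px (pt phi) x t) (px (px (pt phi)) x t) (px (px (px (pt phi))) x t)).
Proof.
  intros Hs Hn.
  assert (Hs1 : smooth2 (px phi)) by exact (smooth2_iterD (true :: nil) phi Hs).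
  assert (Hs2 : smooth2 (px (px phi))) by exact (smooth2_iterD (true :: true :: nil) phi Hs).
  assert (C1 : pt (px phi) = px (pt phi)) by exact (pt_px_comm phi Hs).
  assert (C2 : pt (px (px phi)) = px (px (pt phi)))
    by now rewrite (pt_px_comm _ Hs1), C1.
  assert (C3 : pt (px (px (px phi))) = px (px (px (pt phi))))
    by now rewrite (pt_px_comm _ Hs2), C2.
  rewrite <- C3, <- C2, <- C1.
  apply (is_derive_schwarzian_jet (fun s => px phi x s) (fun s => px (px phi) x s)
           (fun s => px (px (px phi)) x s)); [..| exact Hn];
    apply smooth2_is_derive_t;
    [ exact Hs1 | exact Hs2 | exact (smooth2_iterD (true :: true :: true :: nil) phi Hs) ].
Qed.

Lemma schwarzian_transport (phi : R -> R -> R) :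
  smooth2 phi -> (forall x t, px phi x t <> 0) ->
  let w := fun x t => pt phi x t / px phi x t in
  forall x t,
    pt (schwarzian_x phi) x t
    = px (px (px w)) x t + 2 * px w x t * schwarzian_x phi x t
      + w x t * px (schwarzian_x phi) x t.
Proof.
  intros Hs Hn w x t.
  pose (b := fun t k y => iterD (repeat true k) (pt phi) y t).
  pose (a := fun t k y => iterD (repeat true k) (px phi) y t).
  assert (jet_deriv : forall f t k y, smooth2 f ->
            is_derive (fun z => iterD (repeat true k) f z t) y
              (iterD (repeat true (S k)) f y t)).
  { intros f s k y Hf. apply smooth2_is_derive_x, smooth2_iterD, Hf. }
  assert (Hb : forall t k y, is_derive (b t k) y (b t (S k) y)).
  { intros s k y. apply jet_deriv, (smooth2_iterD (false :: nil)), Hs. }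
  assert (Ha : forall t k y, is_derive (a t k) y (a t (S k) y)).
  { intros s k y. apply jet_deriv, (smooth2_iterD (true :: nil)), Hs. }
  assert (Ha0 : forall t y, a t 0%nat y <> 0) by (intros s y; apply Hn).
  assert (Dw1 : px w = fun x t => quot1 (b t) (a t) x).
  { apply functional_extensionality; intro y; apply functional_extensionality; intro s.
    apply px_unique, (is_derive_quot0 _ _ (Hb s) (Ha s) (Ha0 s)). }
  assert (Dw2 : px (px w) = fun x t => quot2 (b t) (a t) x).
  { apply functional_extensionality; intro y; apply functional_extensionality; intro s.
    rewrite Dw1. apply px_unique, (is_derive_quot1 _ _ (Hb s) (Ha s) (Ha0 s)). }
  assert (Dw3 : px (px (px w)) x t = quot3 (b t) (a t) x).
  { rewrite Dw2. apply px_unique, (is_derive_quot2 _ _ (Hb t) (Ha t) (Ha0 t)). }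
  rewrite Dw3, Dw1.
  rewrite (pt_unique _ _ _ _ (is_derive_schwarzian_t phi x t Hs (Hn x t))).
  rewrite (px_unique _ _ _ _ (is_derive_schwarzian_x phi x t Hs (Hn x t))).
  exact (schwarzian_transport_jet (b t) (a t) (Ha0 t) x).
Qed.

Lemma px_opp (f : R -> R -> R) : px (fun x t => - f x t) = fun x t => - px f x t.
Proof.
  apply functional_extensionality; intro x; apply functional_extensionality; intro t.
  apply Derive_opp.
Qed.

Lemma pt_opp (f : R -> R -> R) : pt (fun x t => - f x t) = fun x t => - pt f x t.
Proof.
  apply functional_extensionality; intro x; apply functional_extensionality; intro t.
  apply Derive_opp.
Qed.

Theorem mainTheorem3 (a : R) (phi : R -> R -> R) :
  a <> 0 ->
  smooth2 phi ->
  (forall x t, px phi x t <> 0) ->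
  (let w := fun x t => pt phi x t / px phi x t in
   forall x t, w x t - px (px w) x t + a * schwarzian_x phi x t = 0) ->
  let u := fun x t => - (pt phi x t / px phi x t) in
  forall x t,
    pt u x t - pt (px (px u)) x t + a * px (px (px u)) x t
    + 3 * u x t * px u x t - 2 * px u x t * px (px u) x t
    - u x t * px (px (px u)) x t = 0.
Proof.
  intros _ Hs Hn Hyp u x t.
  pose (w := fun x t => pt phi x t / px phi x t).
  pose proof (schwarzian_transport phi Hs Hn) as transport; cbv zeta in transport.
  cbv zeta in Hyp.
  change (fun x t => pt phi x t / px phi x t) with w in Hyp, transport.
  assert (Dw2 : px (px w) = fun x t => w x t + a * schwarzian_x phi x t).
  { apply functional_extensionality; intro y; apply functional_extensionality; intro s.
    specialize (Hyp y s). lra. }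
  assert (Ew : ex_derive (fun y => w y t) x /\ ex_derive (fun s => w x s) t).
  { destruct (proj2 (Hs (false :: nil)) x t), (proj2 (Hs (true :: nil)) x t).
    split; apply ex_derive_div; auto. }
  assert (ES : ex_derive (fun y => schwarzian_x phi y t) x
               /\ ex_derive (fun s => schwarzian_x phi x s) t).
  { split; eexists; [apply is_derive_schwarzian_x | apply is_derive_schwarzian_t]; auto. }
  assert (Dw3 : px (px (px w)) x t = px w x t + a * px (schwarzian_x phi) x t)
    by (rewrite Dw2; apply px_plus_scal; tauto).
  assert (Dw2t : pt (px (px w)) x t = pt w x t + a * pt (schwarzian_x phi) x t)
    by (rewrite Dw2; apply pt_plus_scal; tauto).
  change u with (fun x t => - w x t).
  rewrite !px_opp, !pt_opp. cbv beta.
  rewrite Dw2t, transport, Dw3, Dw2.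
  clearbody w. (* otherwise [ring] unfolds [w] and does not terminate *)
  ring.
Qed.
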